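(* The following set $\mathcal B_0$ of elements is a basis of the complex vector space $\hat{G}_{\Lambda,\Lambda_F}$: (1) all $\bar\Xi^{\lambda_1}_{\lambda_2}\otimes f^{\dot I}_{\dot J}\otimes\Xi^{\lambda_3}_{\lambda_4}$ with $\lambda_1+\lambda_2>2$ and $\lambda_3+\lambda_4>2$; (2) all $\bar\Xi^{\lambda_1}_{\lambda_2}\otimes l^{\dot I}_{\dot J}$ with $\lambda_1\ne1$ or $\lambda_2\ne1$; (3) all $r^{\dot I}_{\dot J}\otimes\Xi^{\lambda_1}_{\lambda_2}$ with $\lambda_1\ne1$ or $\lambda_2\ne1$; (4) all $\sigma^{\dot I}_{\dot J}$; where $\dot I,\dot J$ range over all sequences and the $\lambda_i$ over $\{1,\dots,\Lambda_F\}$.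
   Context: Fix positive integers $\Lambda,\Lambda_F$. A sequence $\dot I=i_1\cdots i_a$ is a finite, possibly empty, sequence of integers in $\{1,\dots,\Lambda\}$; juxtaposition denotes concatenation and $\delta^{\dot I}_{\dot J}$ is $1$ if $\dot I=\dot J$ and $0$ otherwise (similarly for integers). Let $\mathcal{T}_o$ be the complex vector space with basis the symbols $\bar\phi^{\lambda_1}\otimes s^{\dot K}\otimes\phi^{\lambda_2}$, $1\le\lambda_1,\lambda_2\le\Lambda_F$, $\dot K$ any sequence. For all sequences $\dot I,\dot J$ and all $\lambda_i\in\{1,\dots,\Lambda_F\}$ define linear operators on $\mathcal{T}_o$ (each written as a single symbol): first kind: $\bar\Xi^{\lambda_1}_{\lambda_2}\otimes f^{\dot I}_{\dot J}\otimes\Xi^{\lambda_3}_{\lambda_4}(\bar\phi^{\lambda_5}\otimes s^{\dot K}\otimes\phi^{\lambda_6})=\delta^{\lambda_5}_{\lambda_2}\delta^{\dot K}_{\dot J}\delta^{\lambda_6}_{\lambda_4}\,\bar\phi^{\lambda_1}\otimes s^{\dot I}\otimes\phi^{\lambda_3}$; second kind: $\bar\Xi^{\lambda_1}_{\lambda_2}\otimes l^{\dot I}_{\dot J}(\bar\phi^{\lambda_3}\otimes s^{\dot K}\otimes\phi^{\lambda_4})=\delta^{\lambda_3}_{\lambda_2}\sum_{\dot K_1\dot K_2=\dot K}\delta^{\dot K_1}_{\dot J}\,\bar\phi^{\lambda_1}\otimes s^{\dot I\dot K_2}\otimes\phi^{\lambda_4}$; third kind: $r^{\dot I}_{\dot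 J}\otimes\Xi^{\lambda_1}_{\lambda_2}(\bar\phi^{\lambda_3}\otimes s^{\dot K}\otimes\phi^{\lambda_4})=\delta^{\lambda_4}_{\lambda_2}\sum_{\dot K_1\dot K_2=\dot K}\delta^{\dot K_2}_{\dot J}\,\bar\phi^{\lambda_3}\otimes s^{\dot K_1\dot I}\otimes\phi^{\lambda_1}$; fourth kind: $\sigma^{\dot I}_{\dot J}(\bar\phi^{\lambda_1}\otimes s^{\dot K}\otimes\phi^{\lambda_2})=\sum_{\dot K_1\dot K_2\dot K_3=\dot K}\delta^{\dot K_2}_{\dot J}\,\bar\phi^{\lambda_1}\otimes s^{\dot K_1\dot I\dot K_3}\otimes\phi^{\lambda_2}$; sums run over all ways to write $\dot K$ as a concatenation of possibly empty sequences. The open string algebra $\hat{G}_{\Lambda,\Lambda_F}$ is the complex Lie algebra (commutator bracket) of operators on $\mathcal{T}_o$ spanned by all operators of these four kinds; elements are regarded as these operators. *)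

From mathcomp Require Import all_boot all_algebra.
From mathcomp Require Import complex.
From mathcomp Require Import Rstruct.
Set Implicit Arguments.
Unset Strict Implicit.
Unset Printing Implicit Defensive.
Import GRing.Theory.
Local Open Scope ring_scope.

Definition C : fieldType := (Rdefinitions.R)[i].

(* Conventions: an index  v : 'I_n  stands for the integer  v+1  in {1,...,n}.
   n plays the role of Lambda, m the role of Lambda_F.
   A sequence \dot I is an element of  seq 'I_n.
   The basis symbol  \bar\phi^{a} (x) s^{K} (x) \phi^{c}  of T_o is the triple (a, K, c). *)
Definition basisT (n m : nat) := ('I_m * seq 'I_n * 'I_m)%type.

(* A linear operator A on T_o is determined by its matrix coefficients:
   op_coef A b b' = coefficient of the basis vector b' in A(b). *)
Definition opT (n m : nat) := basisT n m -> basisT n m -> C.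

Definition b2C (b : bool) : C := (nat_of_bool b)%:R.

Definition opF n m (l1 l2 : 'I_m) (I J : seq 'I_n) (l3 l4 : 'I_m) : opT n m :=
  fun b b' =>
    let: (a, K, c) := b in let: (a', K', c') := b' in
    b2C [&& a == l2, K == J, c == l4, a' == l1, K' == I & c' == l3].

(* second kind:  \bar\Xi^{l1}_{l2} (x) l^{I}_{J}.  The decompositions K = K1 K2
   are indexed by i <= size K with K1 = take i K, K2 = drop i K. *)
Definition opL n m (l1 l2 : 'I_m) (I J : seq 'I_n) : opT n m :=
  fun b b' =>
    let: (a, K, c) := b in let: (a', K', c') := b' in
    b2C [&& a == l2, a' == l1 & c' == c] *
    (\sum_(i < (size K).+1)
        nat_of_bool ((take i K == J) && (K' == I ++ drop i K)))%N%:R.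

Definition opR n m (I J : seq 'I_n) (l1 l2 : 'I_m) : opT n m :=
  fun b b' =>
    let: (a, K, c) := b in let: (a', K', c') := b' in
    b2C [&& c == l2, c' == l1 & a' == a] *
    (\sum_(i < (size K).+1)
        nat_of_bool ((drop i K == J) && (K' == take i K ++ I)))%N%:R.

(* fourth kind:  \sigma^{I}_{J}.  Decompositions K = K1 K2 K3 are indexed by
   i <= j <= size K with K1 = take i K, K2 = drop i (take j K), K3 = drop j K. *)
Definition opS n m (I J : seq 'I_n) : opT n m :=
  fun b b' =>
    let: (a, K, c) := b in let: (a', K', c') := b' in
    b2C ((a' == a) && (c' == c)) *
    (\sum_(j < (size K).+1) \sum_(i < j.+1)
        nat_of_bool ((drop i (take j K) == J) &&
                     (K' == take i K ++ I ++ drop j K)))%N%:R.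

Inductive gen (n m : nat) : Type :=
| GF of 'I_m & 'I_m & seq 'I_n & seq 'I_n & 'I_m & 'I_m
| GL of 'I_m & 'I_m & seq 'I_n & seq 'I_n
| GR of seq 'I_n & seq 'I_n & 'I_m & 'I_m
| GS of seq 'I_n & seq 'I_n.

Definition op_of n m (g : gen n m) : opT n m :=
  match g with
  | GF l1 l2 I' J' l3 l4 => opF l1 l2 I' J' l3 l4
  | GL l1 l2 I' J' => opL l1 l2 I' J'
  | GR I' J' l1 l2 => opR I' J' l1 l2
  | GS I' J' => @opS n m I' J'
  end.

(* The set B_0 (recall the integer value of l : 'I_m is l.+1). *)
Definition inB0 n m (g : gen n m) : bool :=
  match g with
  | GF l1 l2 _ _ l3 l4 => (2 < l1.+1 + l2.+1)%N && (2 < l3.+1 + l4.+1)%N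
  | GL l1 l2 _ _ => (l1.+1 != 1%N) || (l2.+1 != 1%N)
  | GR _ _ l1 l2 => (l1.+1 != 1%N) || (l2.+1 != 1%N)
  | GS _ _ => true
  end.

Definition lincomb n m k (c : 'I_k -> C) (f : 'I_k -> gen n m) : opT n m :=
  fun b b' => \sum_(i < k) c i * op_of (f i) b b'.

(* Sorting the decompositions K = K1 J K3 counted by σ^I_J according to
   whether K1 is empty or ends with a letter x gives
     σ^I_J = Σ_λ Ξbar^λ_λ ⊗ l^I_J + Σ_x σ^{xI}_{xJ},
   and in the same way
     σ^I_J = Σ_λ r^I_J ⊗ Ξ^λ_λ + Σ_x σ^{Ix}_{Jx},
     Ξbar ⊗ l^I_J = Σ_λ Ξbar ⊗ f^I_J ⊗ Ξ^λ_λ + Σ_x Ξbar ⊗ l^{Ix}_{Jx},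
     r^I_J ⊗ Ξ = Σ_λ Ξbar^λ_λ ⊗ f^I_J ⊗ Ξ + Σ_x r^{xI}_{xJ} ⊗ Ξ.
   Solved for the λ = 1 term, each identity expresses an operator outside B_0
   through elements of B_0 and operators already known to be spanned.

   Test an element g of B_0 on the basis vector carrying its pattern
   J and the labels it matches, the labels it ignores set to 1, and read off the
   coefficient of the vector carrying I.  It is nonzero, and every other element of
   B_0 with a nonzero coefficient there matches a shorter pattern, or the same
   pattern with fewer boundary labels: an element tying with g would have both
   labels of one end equal to 1.  So the coefficient matrix is triangular. *)

From mathcomp Require Import all_boot all_algebra.
From mathcomp Require Import complex Rstruct zify ring.
Import GRing.Theory Num.Theory.
Set Implicit Arguments.
Unset Strict Implicit.
Unset Printing Implicit Defensive.

Section RewriteCounts.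
Variable T : eqType.

(* The number of ways to rewrite K into K' by replacing a prefix (suffix, factor) J
   of K with I: the word parts of the coefficients of [opL], [opR] and [opS]. *)
Definition nrw_prefix (I J K K' : seq T) : nat :=
  \sum_(i < (size K).+1) ((take i K == J) && (K' == I ++ drop i K)).
Definition nrw_suffix (I J K K' : seq T) : nat :=
  \sum_(i < (size K).+1) ((drop i K == J) && (K' == take i K ++ I)).
Definition nrw_infix (I J K K' : seq T) : nat :=
  \sum_(j < (size K).+1) \sum_(i < j.+1)
    ((drop i (take j K) == J) && (K' == take i K ++ I ++ drop j K)).

Lemma nrw_prefix_nil (I K K' : seq T) : nrw_prefix I [::] K K' = (K' == I ++ K).
Proof.
rewrite /nrw_prefix big_ord_recl take0 drop0 big1 ?addn0 // => i _.
by case: K i => [|k K] [i hi].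
Qed.

Lemma nrw_prefix_cons (I J K K' : seq T) j k :
  nrw_prefix I (j :: J) (k :: K) K' = ((k == j) * nrw_prefix I J K K')%N.
Proof.
rewrite /nrw_prefix big_ord_recl /= add0n big_distrr /=; apply: eq_bigr => i _.
by rewrite eqseq_cons; case: (k == j); rewrite ?mul1n ?mul0n.
Qed.

Lemma nrw_suffix_cons (I J K K' : seq T) k :
  nrw_suffix I J (k :: K) K' = ((k :: K == J) && (K' == I) +
    if K' is k' :: K'' then (k' == k) * nrw_suffix I J K K'' else 0)%N.
Proof.
rewrite /nrw_suffix big_ord_recl drop0 take0; congr (_ + _)%N.
case: K' => [|k' K'']; first by rewrite big1 // => i _; rewrite andbF.
rewrite big_distrr /=; apply: eq_bigr => i _.
by rewrite eqseq_cons; case: (k' == k); rewrite /= ?mul1n ?mul0n ?andbF.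
Qed.

Lemma nrw_infix_cons (I J K K' : seq T) k :
  nrw_infix I J (k :: K) K' = (nrw_prefix I J (k :: K) K' +
    if K' is k' :: K'' then (k' == k) * nrw_infix I J K K'' else 0)%N.
Proof.
rewrite /nrw_infix /nrw_prefix big_ord_recl big_ord_recl big_ord0 /= addn0.
under eq_bigr => j _ do rewrite big_ord_recl.
rewrite big_split addnA [in RHS]big_ord_recl; congr (_ + _)%N.
case: K' => [|k' K''].
  by rewrite big1 // => j _; rewrite big1 // => i _; rewrite andbF.
rewrite big_distrr; apply: eq_bigr => j _; rewrite big_distrr; apply: eq_bigr => i _.
by rewrite eqseq_cons; case: (k' == k); rewrite /= ?mul1n ?mul0n ?andbF.
Qed.

Lemma nrw_suffix_rev (I J K K' : seq T) :
  nrw_suffix I J K K' = nrw_prefix (rev I) (rev J) (rev K) (rev K').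
Proof.
rewrite /nrw_suffix /nrw_prefix size_rev (reindex_inj rev_ord_inj).
apply: eq_bigr => i _.
by rewrite take_rev drop_rev -rev_cat !(inj_eq (can_inj (@revK _))).
Qed.

Lemma nrw_prefix_neq0 (I J K K' : seq T) : nrw_prefix I J K K' != 0%N ->
  exists2 i, (i <= size K)%N & take i K = J /\ K' = I ++ drop i K.
Proof.
rewrite sum_nat_eq0 => /forallPn [[i /= lt_i]].
by case: andP => // -[/eqP <- /eqP ->] _; exists i.
Qed.

Lemma nrw_suffix_neq0 (I J K K' : seq T) : nrw_suffix I J K K' != 0%N ->
  exists2 i, (i <= size K)%N & drop i K = J /\ K' = take i K ++ I.
Proof.
rewrite sum_nat_eq0 => /forallPn [[i /= lt_i]].
by case: andP => // -[/eqP <- /eqP ->] _; exists i.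
Qed.

Lemma nrw_infix_neq0 (I J K K' : seq T) : nrw_infix I J K K' != 0%N ->
  exists i j, [/\ (i <= j <= size K)%N, drop i (take j K) = J &
                  K' = take i K ++ I ++ drop j K].
Proof.
rewrite sum_nat_eq0 => /forallPn [[j /= lt_j]].
rewrite sum_nat_eq0 => /forallPn [[i /= lt_i]].
case: andP => // -[/eqP <- /eqP ->] _; exists i, j.
by split=> //; rewrite -ltnS lt_i -ltnS lt_j.
Qed.

End RewriteCounts.

Section RewriteCountRecurrences.
Variable T : finType.

Lemma nrw_prefix_split_right (I J K K' : seq T) :
  nrw_prefix I J K K' = ((K == J) && (K' == I) +
    \sum_(x : T) nrw_prefix (rcons I x) (rcons J x) K K')%N.
Proof.
elim: K I J K' => [|k K IH] I J K'.
  rewrite {1}/nrw_prefix big_ord_recl big_ord0 cats0 addn0 big1 ?addn0 // => x _.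
  by rewrite /nrw_prefix big_ord_recl big_ord0; case: J.
case: J => [|j J].
  rewrite nrw_prefix_nil add0n.
  under eq_bigr => x _ do rewrite /= nrw_prefix_cons nrw_prefix_nil.
  rewrite (bigD1 k) //= eqxx mul1n cat_rcons big1 ?addn0 // => x /negbTE.
  by rewrite eq_sym => ->.
under eq_bigr => x _ do rewrite rcons_cons nrw_prefix_cons.
rewrite nrw_prefix_cons IH eqseq_cons -big_distrr /= -andbA.
by case: (k == j); rewrite ?mul1n ?mul0n.
Qed.

Lemma nrw_suffix_split_left (I J K K' : seq T) :
  nrw_suffix I J K K' = ((K == J) && (K' == I) +
    \sum_(x : T) nrw_suffix (x :: I) (x :: J) K K')%N.
Proof.
rewrite nrw_suffix_rev nrw_prefix_split_right !(inj_eq (can_inj (@revK _))).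
by congr (_ + _)%N; apply: eq_bigr => x _; rewrite nrw_suffix_rev !rev_cons.
Qed.

Lemma sum_nrw_prefix_cons (I J K K' : seq T) k :
  (\sum_(x : T) nrw_prefix (x :: I) (x :: J) (k :: K) K' =
   if K' is k' :: K'' then (k' == k) * nrw_prefix I J K K'' else 0)%N.
Proof.
rewrite /nrw_prefix.
under eq_bigr => x _ do rewrite big_ord_recl /= add0n.
rewrite exchange_big /=.
case: K' => [|k' K''].
  by rewrite big1 // => i _; rewrite big1 // => x _; rewrite andbF.
rewrite big_distrr /=; apply: eq_bigr => i _.
rewrite (bigD1 k) //= big1 ?addn0.
  by rewrite !eqseq_cons eqxx; case: (k' == k); rewrite ?mul1n ?mul0n ?andbF.
by move=> x /negbTE x_k; rewrite !eqseq_cons eq_sym x_k.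
Qed.

Lemma nrw_infix_split_left (I J K K' : seq T) :
  nrw_infix I J K K' = (nrw_prefix I J K K' +
    \sum_(x : T) nrw_infix (x :: I) (x :: J) K K')%N.
Proof.
elim: K I J K' => [|k K IH] I J K'.
  rewrite /nrw_infix /nrw_prefix !big_ord_recl !big_ord0 big1 // => x _.
  by rewrite !big_ord_recl !big_ord0.
under eq_bigr => x _ do rewrite nrw_infix_cons.
rewrite nrw_infix_cons big_split sum_nrw_prefix_cons; congr (_ + _)%N.
case: K' => [|k' K'']; first by rewrite big1.
by rewrite IH mulnDr -big_distrr.
Qed.

Lemma nrw_infix_split_right (I J K K' : seq T) :
  nrw_infix I J K K' = (nrw_suffix I J K K' +
    \sum_(x : T) nrw_infix (rcons I x) (rcons J x) K K')%N.
Proof.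
elim: K I J K' => [|k K IH] I J K'.
  rewrite /nrw_infix /nrw_suffix !big_ord_recl !big_ord0 big1 /= ?cats0 // => x _.
  by rewrite !big_ord_recl !big_ord0; case: J.
under eq_bigr => x _ do rewrite nrw_infix_cons.
rewrite nrw_infix_cons nrw_suffix_cons nrw_prefix_split_right big_split /=.
case: K' => [|k' K'']; first by rewrite big1_eq !addn0.
rewrite IH mulnDr -big_distrr /=; ring.
Qed.

End RewriteCountRecurrences.

Local Open Scope ring_scope.

Lemma b2C_false : b2C false = 0.
Proof. exact: mulr0n. Qed.

Lemma b2C_and (b1 b2 : bool) : b2C (b1 && b2) = b2C b1 * b2C b2.
Proof. by case: b1; rewrite /b2C /= ?mul1r ?mul0r ?mulr0n. Qed.

Lemma b2C_neq0 (b : bool) : b2C b != 0 -> b.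
Proof. by case: b; rewrite ?b2C_false ?eqxx. Qed.

Lemma b2C_natr_neq0 (b : bool) (k : nat) : b2C b * k%:R != 0 -> b /\ k != 0%N.
Proof. by case: b; rewrite ?b2C_false ?mul0r ?eqxx // /b2C mul1r pnatr_eq0. Qed.

Section OperatorSplittings.
Variables n m : nat.

Lemma opS_split_left (X J : seq 'I_n) (b b' : basisT n m) :
  opS X J b b' =
  \sum_(l < m) opL l l X J b b' + \sum_(x < n) opS (x :: X) (x :: J) b b'.
Proof.
case: b b' => [[a K] c] [[a' K'] c'] /=.
rewrite (big_only1 a) // => [|l /negbTE l_a _]; last by rewrite eq_sym l_a b2C_false mul0r.
under [\sum_(x < n) _]eq_bigr => x _ do rewrite -/(nrw_infix (x :: X) (x :: J) K K').
rewrite -/(nrw_infix X J K K') -/(nrw_prefix X J K K') nrw_infix_split_left.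
by rewrite eqxx natrD natr_sum mulrDr mulr_sumr.
Qed.

Lemma opS_split_right (X J : seq 'I_n) (b b' : basisT n m) :
  opS X J b b' = \sum_(l < m) opR X J l l b b' +
                 \sum_(x < n) opS (rcons X x) (rcons J x) b b'.
Proof.
case: b b' => [[a K] c] [[a' K'] c'] /=.
rewrite (big_only1 c) // => [|l /negbTE l_c _]; last by rewrite eq_sym l_c b2C_false mul0r.
under [\sum_(x < n) _]eq_bigr => x _ do rewrite -/(nrw_infix (rcons X x) (rcons J x) K K').
rewrite -/(nrw_infix X J K K') -/(nrw_suffix X J K K') nrw_infix_split_right.
by rewrite eqxx [(c' == c) && _]andbC natrD natr_sum mulrDr mulr_sumr.
Qed.

Lemma opL_split_right (l1 l2 : 'I_m) (X J : seq 'I_n) (b b' : basisT n m) :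
  opL l1 l2 X J b b' = \sum_(l < m) opF l1 l2 X J l l b b' +
                       \sum_(x < n) opL l1 l2 (rcons X x) (rcons J x) b b'.
Proof.
case: b b' => [[a K] c] [[a' K'] c'] /=.
rewrite (big_only1 c) // => [|l /negbTE l_c _]; last first.
  by rewrite [c == l]eq_sym l_c /= !andbF.
under [\sum_(x < n) _]eq_bigr => x _ do rewrite -/(nrw_prefix (rcons X x) (rcons J x) K K').
rewrite -/(nrw_prefix X J K K') nrw_prefix_split_right natrD natr_sum mulrDr mulr_sumr.
congr (_ + _); rewrite -[_%:R]/(b2C _) -b2C_and eqxx.
by congr b2C; case: (a == l2); case: (K == J); case: (K' == X);
  rewrite /= ?andbT ?andbF.
Qed.

Lemma opR_split_left (l1 l2 : 'I_m) (X J : seq 'I_n) (b b' : basisT n m) :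
  opR X J l1 l2 b b' = \sum_(l < m) opF l l X J l1 l2 b b' +
                       \sum_(x < n) opR (x :: X) (x :: J) l1 l2 b b'.
Proof.
case: b b' => [[a K] c] [[a' K'] c'] /=.
rewrite (big_only1 a) // => [|l /negbTE l_a _]; last by rewrite [a == l]eq_sym l_a.
under [\sum_(x < n) _]eq_bigr => x _ do rewrite -/(nrw_suffix (x :: X) (x :: J) K K').
rewrite -/(nrw_suffix X J K K') nrw_suffix_split_left natrD natr_sum mulrDr mulr_sumr.
congr (_ + _); rewrite -[_%:R]/(b2C _) -b2C_and eqxx.
by congr b2C; case: (c == l2); case: (K == J); case: (a' == a); case: (K' == X);
  rewrite /= ?andbT ?andbF.
Qed.

End OperatorSplittings.

Section SpanB0.
Variables n m : nat.

Definition lincomb_seq (s : seq (C * gen n m)) : opT n m :=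
  fun b b' => \sum_(p <- s) p.1 * op_of p.2 b b'.

Definition spanB0 (T : opT n m) : Prop :=
  exists2 s : seq (C * gen n m), all (fun p => inB0 p.2) s &
    forall b b', T b b' = lincomb_seq s b b'.

Lemma spanB0_ext (T T' : opT n m) :
  spanB0 T -> (forall b b', T b b' = T' b b') -> spanB0 T'.
Proof. by move=> [s s_B0 eq_s] eqT; exists s => // b b'; rewrite -eqT. Qed.

Lemma spanB0_op (g : gen n m) : inB0 g -> spanB0 (op_of g).
Proof.
by exists [:: (1, g)]; rewrite /= ?andbT // => b b'; rewrite /lincomb_seq big_seq1 mul1r.
Qed.

Lemma spanB0_add (T1 T2 : opT n m) :
  spanB0 T1 -> spanB0 T2 -> spanB0 (fun b b' => T1 b b' + T2 b b').
Proof.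
move=> [s1 s1_B0 eq_s1] [s2 s2_B0 eq_s2]; exists (s1 ++ s2).
  by rewrite all_cat s1_B0 s2_B0.
by move=> b b'; rewrite /lincomb_seq big_cat eq_s1 eq_s2.
Qed.

Lemma spanB0_scale (a : C) (T : opT n m) :
  spanB0 T -> spanB0 (fun b b' => a * T b b').
Proof.
move=> [s s_B0 eq_s]; exists [seq (a * p.1, p.2) | p <- s]; first by rewrite all_map.
move=> b b'; rewrite /lincomb_seq big_map eq_s mulr_sumr.
by apply: eq_bigr => p _; rewrite mulrA.
Qed.

Lemma spanB0_sum (I : Type) (r : seq I) (P : pred I) (F : I -> opT n m) :
  (forall i, P i -> spanB0 (F i)) ->
  spanB0 (fun b b' => \sum_(i <- r | P i) F i b b').
Proof.
move=> F_B0; elim: r => [|i r IHr].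
  by exists [::] => // b b'; rewrite big_nil /lincomb_seq big_nil.
have [Pi|nPi] := boolP (P i); last first.
  by apply: (spanB0_ext IHr) => b b'; rewrite big_cons (negbTE nPi).
by apply: (spanB0_ext (spanB0_add (F_B0 i Pi) IHr)) => b b'; rewrite big_cons Pi.
Qed.

Lemma spanB0_of_split (I J : finType) (i0 : I) (F : I -> opT n m)
    (G : J -> opT n m) (T : opT n m) :
  (forall b b', T b b' = \sum_i F i b b' + \sum_j G j b b') ->
  spanB0 T -> (forall i, i != i0 -> spanB0 (F i)) -> (forall j, spanB0 (G j)) ->
  spanB0 (F i0).
Proof.
move=> eqT T_B0 F_B0 G_B0.
have sumF_B0 := spanB0_sum (index_enum I) F_B0.
have sumG_B0 := spanB0_sum (index_enum J) (P := xpredT) (fun j _ => G_B0 j).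
apply: (spanB0_ext (spanB0_add T_B0 (spanB0_scale (-1) (spanB0_add sumF_B0 sumG_B0)))).
by move=> b b'; rewrite eqT (bigD1 i0) //=; ring.
Qed.

Lemma spanB0_lincomb (T : opT n m) : spanB0 T ->
  exists (k : nat) (f : 'I_k -> gen n m) (c : 'I_k -> C),
    (forall i, inB0 (f i)) /\ (forall b b', T b b' = lincomb c f b b').
Proof.
move=> [s s_B0 eq_s]; pose p0 : C * gen n m := (0, @GS n m [::] [::]).
exists (size s), (fun i => (nth p0 s i).2), (fun i => (nth p0 s i).1); split.
  by move=> i; apply: (all_nthP p0 s_B0).
by move=> b b'; rewrite eq_s /lincomb_seq /lincomb (big_nth p0) big_mkord.
Qed.

End SpanB0.

Section Spanning.
Variables n m : nat.

Lemma inB0_GL (l1 l2 : 'I_m.+1) (X J : seq 'I_n) :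
  inB0 (GL l1 l2 X J) = (l1 != ord0) || (l2 != ord0).
Proof. by []. Qed.

Lemma inB0_GR (l1 l2 : 'I_m.+1) (X J : seq 'I_n) :
  inB0 (GR X J l1 l2) = (l1 != ord0) || (l2 != ord0).
Proof. by []. Qed.

Lemma inB0_GF (l1 l2 : 'I_m.+1) (X J : seq 'I_n) (l3 l4 : 'I_m.+1) :
  inB0 (GF l1 l2 X J l3 l4) =
  ((l1 != ord0) || (l2 != ord0)) && ((l3 != ord0) || (l4 != ord0)).
Proof. by rewrite /= !addSn !addnS !ltnS !lt0n !addn_eq0 !negb_and. Qed.

Lemma spanB0_opS (X J : seq 'I_n) : spanB0 (@opS n m.+1 X J).
Proof. exact: (spanB0_op (g := GS m.+1 X J)). Qed.

Lemma spanB0_opL (l1 l2 : 'I_m.+1) (X J : seq 'I_n) : spanB0 (opL l1 l2 X J).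
Proof.
have [l12_B0|/norP[/negPn/eqP-> /negPn/eqP->]] := boolP ((l1 != ord0) || (l2 != ord0)).
  by apply: (spanB0_op (g := GL l1 l2 X J)).
apply: (spanB0_of_split (i0 := ord0) (opS_split_left X J) (spanB0_opS X J)) => [l l_nz|x].
  by apply: (spanB0_op (g := GL l l X J)); rewrite inB0_GL l_nz.
exact: spanB0_opS.
Qed.

Lemma spanB0_opR (l1 l2 : 'I_m.+1) (X J : seq 'I_n) : spanB0 (opR X J l1 l2).
Proof.
have [l12_B0|/norP[/negPn/eqP-> /negPn/eqP->]] := boolP ((l1 != ord0) || (l2 != ord0)).
  by apply: (spanB0_op (g := GR X J l1 l2)).
apply: (spanB0_of_split (i0 := ord0) (opS_split_right X J) (spanB0_opS X J)) => [l l_nz|x].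
  by apply: (spanB0_op (g := GR X J l l)); rewrite inB0_GR l_nz.
exact: spanB0_opS.
Qed.

Lemma spanB0_opF_right (l1 l2 : 'I_m.+1) (X J : seq 'I_n) (l3 l4 : 'I_m.+1) :
  (l3 != ord0) || (l4 != ord0) -> spanB0 (opF l1 l2 X J l3 l4).
Proof.
move=> l34_nz.
have [l12_nz|/norP[/negPn/eqP-> /negPn/eqP->]] := boolP ((l1 != ord0) || (l2 != ord0)).
  by apply: (spanB0_op (g := GF l1 l2 X J l3 l4)); rewrite inB0_GF l12_nz l34_nz.
apply: (spanB0_of_split (i0 := ord0) (opR_split_left l3 l4 X J) (spanB0_opR l3 l4 X J)).
  by move=> l l_nz; apply: (spanB0_op (g := GF l l X J l3 l4)); rewrite inB0_GF l_nz.
by move=> x; apply: spanB0_opR.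
Qed.

Lemma spanB0_opF (l1 l2 : 'I_m.+1) (X J : seq 'I_n) (l3 l4 : 'I_m.+1) :
  spanB0 (opF l1 l2 X J l3 l4).
Proof.
have [l34_nz|/norP[/negPn/eqP-> /negPn/eqP->]] := boolP ((l3 != ord0) || (l4 != ord0)).
  exact: spanB0_opF_right.
apply: (spanB0_of_split (i0 := ord0) (opL_split_right l1 l2 X J) (spanB0_opL l1 l2 X J)).
  by move=> l l_nz; apply: spanB0_opF_right; rewrite l_nz.
by move=> x; apply: spanB0_opL.
Qed.

Lemma spanB0_op_of (g : gen n m.+1) : spanB0 (op_of g).
Proof.
case: g => [l1 l2 X J l3 l4|l1 l2 X J|X J l1 l2|X J].
- exact: spanB0_opF.
- exact: spanB0_opL.
- exact: spanB0_opR.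
- exact: spanB0_opS.
Qed.

End Spanning.

Lemma triangular_free (R : idomainType) (A B : Type) (ev : A -> B -> R)
    (test : A -> B) (rank : A -> nat) k (f : 'I_k -> A) (c : 'I_k -> R) :
  injective f -> (forall i, ev (f i) (test (f i)) != 0) ->
  (forall i j, ev (f j) (test (f i)) != 0 ->
     f j = f i \/ (rank (f j) < rank (f i))%N) ->
  (forall t, \sum_i c i * ev (f i) t = 0) -> forall i, c i = 0.
Proof.
move=> f_inj ev_test ev_tri comb0 i.
elim: {i}(rank (f i)).+1 {-2}i (ltnSn (rank (f i))) => // r IHr i lt_i_r.
have := comb0 (test (f i)); rewrite (bigD1 i) //= big1 ?addr0.
  by move/eqP; rewrite mulf_eq0 (negbTE (ev_test i)) orbF => /eqP.
move=> j j_i; have [->|ev_ji] := eqVneq (ev (f j) (test (f i))) 0; first by rewrite mulr0.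
case: (ev_tri i j ev_ji) => [/f_inj eq_ji|lt_ji]; first by rewrite eq_ji eqxx in j_i.
by rewrite IHr ?mul0r // (leq_trans lt_ji).
Qed.

Section Independence.
Variables n m : nat.

Definition gen_src (g : gen n m.+1) : seq 'I_n :=
  match g with GF _ _ _ J _ _ | GL _ _ _ J | GR _ J _ _ | GS _ J => J end.
Definition gen_tgt (g : gen n m.+1) : seq 'I_n :=
  match g with GF _ _ X _ _ _ | GL _ _ X _ | GR X _ _ _ | GS X _ => X end.
Definition gen_ends (g : gen n m.+1) : nat :=
  match g with GF _ _ _ _ _ _ => 2 | GL _ _ _ _ | GR _ _ _ _ => 1 | GS _ _ => 0 end.
(* [gen_ends g <= 2], so [gen_rank] is lexicographic in (size (gen_src g), gen_ends g). *)
Definition gen_rank (g : gen n m.+1) : nat := 3 * size (gen_src g) + gen_ends g.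

Definition test_pair (g : gen n m.+1) : basisT n m.+1 * basisT n m.+1 :=
  match g with
  | GF l1 l2 X J l3 l4 => ((l2, J, l4), (l1, X, l3))
  | GL l1 l2 X J => ((l2, J, ord0), (l1, X, ord0))
  | GR X J l1 l2 => ((ord0, J, l2), (ord0, X, l1))
  | GS X J => ((ord0, J, ord0), (ord0, X, ord0))
  end.

Lemma op_of_neq0_src (g : gen n m.+1) a K c a' K' c' :
  op_of g (a, K, c) (a', K', c') != 0 ->
  (size (gen_src g) <= size K)%N /\
  (size (gen_src g) = size K -> gen_src g = K /\ gen_tgt g = K').
Proof.
case: g => [l1 l2 X J l3 l4|l1 l2 X J|X J l1 l2|X J] /= op_neq0.
- by case/b2C_neq0/and5P: op_neq0 => _ /eqP -> _ _ /andP[/eqP -> _].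
- case: (b2C_natr_neq0 op_neq0) => _ /nrw_prefix_neq0 [i le_i [<- ->]].
  rewrite size_takel //; split=> // eq_i.
  by rewrite eq_i take_size drop_size cats0.
- case: (b2C_natr_neq0 op_neq0) => _ /nrw_suffix_neq0 [i le_i [<- ->]].
  rewrite size_drop leq_subr; split=> // eq_i.
  have i0 : i = 0%N by move: le_i eq_i; set s := size K; lia.
  by rewrite i0 drop0 take0.
- case: (b2C_natr_neq0 op_neq0) => _ /nrw_infix_neq0 [i [j [/andP[le_ij le_j] <- ->]]].
  rewrite size_drop size_takel // (leq_trans (leq_subr _ _) le_j); split=> // eq_ij.
  have [-> ->] : i = 0%N /\ j = size K by move: le_ij le_j eq_ij; set s := size K; lia.
  by rewrite take_size drop_size take0 drop0 cats0.
Qed.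

Lemma op_of_test_pair_neq0 (g : gen n m.+1) :
  op_of g (test_pair g).1 (test_pair g).2 != 0.
Proof.
case: g => [l1 l2 X J l3 l4|l1 l2 X J|X J l1 l2|X J] /=;
  rewrite !eqxx ?mulr1n ?oner_neq0 //=.
all: rewrite /b2C mul1r pnatr_eq0 -lt0n.
- by rewrite (bigD1 ord_max) //= take_size drop_size cats0 !eqxx.
- by rewrite (bigD1 ord0) //= take0 drop0 !eqxx.
- rewrite (bigD1 ord_max) //= (bigD1 ord0) //=.
  by rewrite take_size drop_size take0 drop0 cats0 !eqxx.
Qed.

Lemma op_of_test_pair_eq (g g' : gen n m.+1) :
  inB0 g -> inB0 g' -> gen_src g' = gen_src g -> gen_tgt g' = gen_tgt g ->
  (gen_ends g <= gen_ends g')%N ->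
  op_of g' (test_pair g).1 (test_pair g).2 != 0 -> g' = g.
Proof.
case: g => [l1 l2 X J l3 l4|l1 l2 X J|X J l1 l2|X J] g_B0;
case: g' => [l1' l2' X' J' l3' l4'|l1' l2' X' J'|X' J' l1' l2'|X' J'] g'_B0 /=
  -> -> // _ op_neq0.
all: first [ case/b2C_neq0/and5P: op_neq0 => /eqP? _ /eqP? /eqP? /andP[_ /eqP?]
           | case/b2C_natr_neq0: op_neq0 => /and3P[/eqP? /eqP? _] _ ]; subst => //.
all: by move: g'_B0; rewrite ?inB0_GF ?inB0_GL ?inB0_GR eqxx ?andbF.
Qed.

Lemma op_of_test_pair_triangular (g g' : gen n m.+1) :
  inB0 g -> inB0 g' -> op_of g' (test_pair g).1 (test_pair g).2 != 0 ->
  g' = g \/ (gen_rank g' < gen_rank g)%N.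
Proof.
move=> g_B0 g'_B0 op_neq0.
have [le_size eq_size] : (size (gen_src g') <= size (gen_src g))%N /\
    (size (gen_src g') = size (gen_src g) ->
     gen_src g' = gen_src g /\ gen_tgt g' = gen_tgt g).
  by case: g {g_B0} op_neq0 => [l1 l2 X J l3 l4|l1 l2 X J|X J l1 l2|X J] /op_of_neq0_src.
have [|ge_rank] := ltnP (gen_rank g') (gen_rank g); [by right | left].
have ends_le2 (h : gen n m.+1) : (gen_ends h <= 2)%N by case: h.
move: ge_rank (ends_le2 g) (ends_le2 g'); rewrite /gen_rank => ge_rank le_g le_g'.
have eq_src : size (gen_src g') = size (gen_src g) by lia.
have [src_eq tgt_eq] := eq_size eq_src.
by apply: op_of_test_pair_eq => //; lia.
Qed.

End Independence.

Theorem proposition1 (Lambda LambdaF : nat) :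
  (0 < Lambda)%N -> (0 < LambdaF)%N ->
  (* linear independence of the family B_0 (indexed without repetition) *)
  (forall (k : nat) (f : 'I_k -> gen Lambda LambdaF) (c : 'I_k -> C),
     injective f -> (forall i, inB0 (f i)) ->
     (forall b b', lincomb c f b b' = 0) ->
     forall i, c i = 0) /\
  (* B_0 spans the span of all operators of the four kinds *)
  (forall g : gen Lambda LambdaF,
     exists (k : nat) (f : 'I_k -> gen Lambda LambdaF) (c : 'I_k -> C),
       (forall i, inB0 (f i)) /\
       (forall b b', op_of g b b' = lincomb c f b b')).
Proof.
case: LambdaF => [//|m] _ _; split=> [k f c f_inj f_B0 comb0|g].
  apply: (triangular_free (ev := fun g t => op_of g t.1 t.2)
            (test := @test_pair Lambda m) (rank := @gen_rank Lambda m) f_inj)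
    => [i|i j|[b b']].
  - exact: op_of_test_pair_neq0.
  - exact: op_of_test_pair_triangular.
  - exact: comb0.
exact: spanB0_lincomb (spanB0_op_of g).
Qed.
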